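(* Consider the system $\dot{x} = \vartheta$, $\dot{\vartheta} = -\lambda \vartheta - x u + x - x^3$, $\dot{u} = -\alpha u - \beta x \vartheta$ with $\lambda \geq 0$, $\alpha > 0$, $\beta > 0$, and assume $\alpha(\sqrt{\lambda^2+4}+\lambda) > 2(\beta-2)$. Let $L > 0$ be a number with $L > \frac{\sqrt{\lambda^2+4}-\lambda}{2}$ and $K = \frac{\beta L}{\alpha + 2L} < 1$, and set $M = 1 - K$. Let $(x^+(t), \vartheta^+(t), u^+(t))$ be the positive outgoing separatrix of the zero saddle equilibrium $(0,0,0)$, i.e. $\lim_{t\to-\infty}(x^+(t),\vartheta^+(t),u^+(t)) = (0,0,0)$ and $x^+(t) > 0$ for all $t \in (-\infty, \tau)$ for some number $\tau$. Suppose that $x^+(t) \geq 0$ for all $t \in (-\infty, \tau]$ and $M > 0$. Then there exists a number $R > 0$ (independent of $\tau$) such that $x^+(t) \leq R$, $|\vartheta^+(t)| \leq R$, $|u^+(t)| \leq R$ for all $t \in (-\infty, \tau]$.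
   Context: The system is a Lorenz-like system obtained from the Lorenz system by a smooth change of variables; its equilibria are $S_0 = (0,0,0)$ (always a saddle for positive parameters) and $S_\pm = (\pm 1, 0, 0)$. The inequality $\alpha(\sqrt{\lambda^2+4}+\lambda) > 2(\beta-2)$ guarantees existence of $L>0$ with $L > \frac{\sqrt{\lambda^2+4}-\lambda}{2}$ and $\frac{\beta L}{\alpha+2L} < 1$. *)

From Stdlib Require Import Reals.
From Coquelicot Require Import Coquelicot.
Open Scope R_scope.

(* (x, th, u) solves the Lorenz-like system
     x' = th,  th' = -lam th - x u + x - x^3,  u' = -alpha u - beta x th
   at every time t <= tau (two-sided derivatives, so the solution lives on an
   open interval containing (-oo, tau]). *)
Definition solves_on (lam alpha beta : R) (x th u : R -> R) (tau : R) : Prop :=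
  forall t, t <= tau ->
    is_derive x t (th t) /\
    is_derive th t (- lam * th t - x t * u t + x t - x t ^ 3) /\
    is_derive u t (- alpha * u t - beta * x t * th t).

Definition pos_separatrix_upto (lam alpha beta : R) (x th u : R -> R) (tau : R) : Prop :=
  solves_on lam alpha beta x th u tau /\
  is_lim x m_infty 0 /\ is_lim th m_infty 0 /\ is_lim u m_infty 0 /\
  (forall t, t < tau -> 0 < x t).

(* Both u + K x^2 and L x - th satisfy a cooperative system of linear
   differential inequalities, coupled through x >= 0; as they vanish at -oo,
   they remain nonnegative (near -oo because x is small there, on compact
   intervals thanks to an exponential weight).  Given these invariants, the
   energy 2 (th^+)^2 + M x^4 - 2 x^2 cannot increase above the level 2 L^2 / M,
   which bounds x; then 2 u + beta x^2 and 2 C x + th^2 (for a constant C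
   built from the bounds already found) cannot increase above explicit levels,
   which bounds u and th.  All levels depend on the parameters only.  Each of
   these barrier arguments rests on the fact that a differentiable function
   crossing a level from below has a crossing point with positive derivative. *)

From Stdlib Require Import Reals Lra Psatz.
From Coquelicot Require Import Coquelicot.
Open Scope R_scope.

Ltac auto_derive_from_hyps :=
  auto_derive;
  [ repeat split; eexists; eassumption
  | repeat match goal with
      H : is_derive ?f ?t ?l |- _ => rewrite (is_derive_unique (fun y : R => f y) t l H)
    end ].

Lemma is_derive_continuity_pt (f : R -> R) t l : is_derive f t l -> continuity_pt f t.
Proof.
  intros Hf. apply derivable_continuous_pt. exists l. now apply is_derive_Reals.
Qed.

Lemma deriv_nonneg_of_left_max (f : R -> R) s p d :
  s < p -> is_derive f p d -> (forall t, s <= t <= p -> f t <= f p) -> 0 <= d.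
Proof.
  intros Hsp Hd Hmax. apply Rnot_lt_le; intros Hneg.
  apply is_derive_Reals in Hd.
  destruct (Hd (- d / 2) ltac:(lra)) as [del Hdel].
  pose proof (cond_pos del) as Hdel0.
  set (h := - Rmin (del / 2) (p - s)).
  assert (Hh : 0 < - h <= p - s /\ - h < del).
  { pose proof (Rmin_l (del / 2) (p - s)); pose proof (Rmin_r (del / 2) (p - s)).
    pose proof (Rmin_pos (del / 2) (p - s) ltac:(lra) ltac:(lra)). unfold h; lra. }
  specialize (Hdel h ltac:(lra) ltac:(rewrite Rabs_left; lra)).
  specialize (Hmax (p + h) ltac:(lra)).
  set (q := (f (p + h) - f p) / h) in Hdel.
  assert (Hq : q * h = f (p + h) - f p) by (unfold q; field; lra).
  apply Rabs_def2 in Hdel. nra.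
Qed.

Lemma continuity_pt_Rmax (f g : R -> R) t :
  continuity_pt f t -> continuity_pt g t -> continuity_pt (fun s => Rmax (f s) (g s)) t.
Proof.
  intros Hf Hg.
  apply (continuity_pt_ext (fun s => (f s + g s + Rabs (f s - g s)) * / 2)).
  { intros s. unfold Rmax. destruct (Rle_dec (f s) (g s)).
    - rewrite Rabs_left1; lra.
    - rewrite Rabs_right; lra. }
  apply (continuity_pt_mult _ (fun _ => / 2)).
  - apply (continuity_pt_plus (fun s => f s + g s)).
    + exact (continuity_pt_plus f g t Hf Hg).
    + exact (continuity_pt_comp _ Rabs t (continuity_pt_minus f g t Hf Hg) (Rcontinuity_abs _)).
  - now apply continuity_pt_const.
Qed.

Lemma exists_crossing_Rmax (P Q dP dQ : R -> R) s t1 m :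
  s < t1 ->
  (forall t, s <= t <= t1 -> is_derive P t (dP t) /\ is_derive Q t (dQ t)) ->
  Rmax (P s) (Q s) < m -> m < Rmax (P t1) (Q t1) ->
  exists p, s < p <= t1 /\
    (m < P p /\ Q p <= P p /\ 0 < dP p \/ m < Q p /\ P p <= Q p /\ 0 < dQ p).
Proof.
  intros Hst Hd Hs Ht.
  set (W := fun t => Rmax (P t) (Q t)).
  set (eps := (W t1 - m) / (2 * (t1 - s))).
  assert (Heps : eps * (t1 - s) = (W t1 - m) / 2) by (unfold eps; field; lra).
  assert (Heps0 : 0 < eps) by (unfold eps, W; apply Rdiv_lt_0_compat; lra).
  (* a maximizer of W - eps * id lies above m and after s, and is a left
     maximum of the active branch minus eps * id *)
  destruct (continuity_ab_maj (fun t => W t - eps * t) s t1 ltac:(lra)) as [p [Hmax Hp]].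
  { intros t Ht'. destruct (Hd t Ht') as [HP HQ].
    apply (continuity_pt_minus W (fun t => eps * t)).
    - exact (continuity_pt_Rmax P Q t
        (is_derive_continuity_pt _ _ _ HP) (is_derive_continuity_pt _ _ _ HQ)).
    - apply (is_derive_continuity_pt _ _ eps). auto_derive; [easy | ring]. }
  pose proof (Hmax t1 ltac:(lra)) as Hpt1. pose proof (Hmax s ltac:(lra)) as Hps.
  assert (Hsp : s < p).
  { destruct (Rle_lt_or_eq_dec s p (proj1 Hp)) as [Hlt | E]; [exact Hlt |].
    subst p. unfold W in *. nra. }
  assert (HWp : m < W p) by nra.
  exists p. split; [lra|].
  destruct (Hd p ltac:(lra)) as [HP HQ].
  destruct (Rle_dec (Q p) (P p)) as [HQP | HPQ].
  - left. unfold W in HWp. rewrite Rmax_left in HWp by lra.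
    assert (0 <= dP p - eps); [|lra].
    apply (deriv_nonneg_of_left_max (fun t => P t - eps * t) s p); [lra | |].
    + auto_derive_from_hyps. ring.
    + intros t Ht'. specialize (Hmax t ltac:(lra)). unfold W in Hmax.
      rewrite (Rmax_left (P p)) in Hmax by lra. pose proof (Rmax_l (P t) (Q t)). lra.
  - right. unfold W in HWp. rewrite Rmax_right in HWp by lra.
    assert (0 <= dQ p - eps); [|lra].
    apply (deriv_nonneg_of_left_max (fun t => Q t - eps * t) s p); [lra | |].
    + auto_derive_from_hyps. ring.
    + intros t Ht'. specialize (Hmax t ltac:(lra)). unfold W in Hmax.
      rewrite (Rmax_right (P p)) in Hmax by lra. pose proof (Rmax_r (P t) (Q t)). lra.
Qed.

Lemma is_lim_m_infty_lt (f : R -> R) (l C : R) :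
  is_lim f m_infty l -> l < C -> exists T, forall t, t < T -> f t < C.
Proof.
  intros Hf HlC. apply is_lim_spec in Hf.
  destruct (Hf (mkposreal (C - l) ltac:(lra))) as [T HT].
  exists T. intros t Ht. specialize (HT t Ht). simpl in HT.
  apply Rabs_def2 in HT. lra.
Qed.

Lemma le_of_deriv_nonpos_above (f df : R -> R) (tau l C : R) :
  (forall t, t <= tau -> is_derive f t (df t)) ->
  is_lim f m_infty l -> l < C ->
  (forall t, t <= tau -> C < f t -> df t <= 0) ->
  forall t, t <= tau -> f t <= C.
Proof.
  intros Hd Hlim HlC Hdown t1 Ht1. apply Rnot_lt_le; intros Hgt.
  destruct (is_lim_m_infty_lt f l C Hlim HlC) as [T HT].
  set (s := Rmin T t1 - 1).
  assert (Hs : s < T /\ s < t1).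
  { pose proof (Rmin_l T t1). pose proof (Rmin_r T t1). unfold s; lra. }
  destruct (exists_crossing_Rmax f f df df s t1 C) as [p [Hp Hcross]]; try lra.
  - intros t Ht. split; apply Hd; lra.
  - rewrite Rmax_left by lra. apply HT; lra.
  - rewrite Rmax_left by lra. exact Hgt.
  - specialize (Hdown p ltac:(lra)). lra.
Qed.

Lemma cooperative_max_le (P Q dP dQ c1 c2 r1 r2 : R -> R) s t1 m :
  s < t1 -> 0 <= m ->
  (forall t, s <= t <= t1 -> is_derive P t (dP t) /\ is_derive Q t (dQ t)) ->
  (forall t, s <= t <= t1 ->
     dP t <= - c1 t * P t + r1 t * Q t /\ dQ t <= - c2 t * Q t + r2 t * P t /\
     0 <= r1 t < c1 t /\ 0 <= r2 t < c2 t) ->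
  Rmax (P s) (Q s) < m -> Rmax (P t1) (Q t1) <= m.
Proof.
  intros Hst Hm Hd Hineq Hs. apply Rnot_lt_le; intros Ht.
  destruct (exists_crossing_Rmax P Q dP dQ s t1 m Hst Hd Hs Ht)
    as [p [Hp [[HP [HQP HdP]] | [HQ [HPQ HdQ]]]]];
    destruct (Hineq p ltac:(lra)) as [IP [IQ [Hr1 Hr2]]]; nra.
Qed.

Lemma cooperative_subsolution_nonpos (p q x dp dq : R -> R) (a1 a2 b tau lp lq : R) :
  0 < a1 -> 0 < a2 -> 0 <= b ->
  (forall t, t <= tau ->
     is_derive p t (dp t) /\ is_derive q t (dq t) /\ continuity_pt x t) ->
  (forall t, t <= tau ->
     0 <= x t /\ dp t <= - a1 * p t + b * x t * q t /\ dq t <= - a2 * q t + x t * p t) ->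
  is_lim p m_infty lp -> lp <= 0 -> is_lim q m_infty lq -> lq <= 0 ->
  is_lim x m_infty 0 ->
  forall t, t <= tau -> p t <= 0 /\ q t <= 0.
Proof.
  intros Ha1 Ha2 Hb Hd Hineq Hp Hlp Hq Hlq Hx.
  assert (max_nonpos : forall a c, (forall m, 0 < m -> Rmax a c <= m) -> a <= 0 /\ c <= 0).
  { intros a c Hac. assert (Rmax a c <= 0).
    { apply Rle_plus_epsilon. intros m Hm. rewrite Rplus_0_l. now apply Hac. }
    pose proof (Rmax_l a c). pose proof (Rmax_r a c). lra. }
  (* near -oo the coupling b x is weaker than the decay rates, so no weight is needed *)
  set (del := Rmin (a1 / (b + 1)) a2).
  assert (Hdel : 0 < del /\ del * (b + 1) <= a1 /\ del <= a2).
  { assert (Hfrac : 0 < a1 / (b + 1)) by (apply Rdiv_lt_0_compat; lra).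
    assert (Hmul : a1 / (b + 1) * (b + 1) = a1) by (field; lra).
    pose proof (Rmin_l (a1 / (b + 1)) a2). pose proof (Rmin_r (a1 / (b + 1)) a2).
    pose proof (Rmin_pos _ _ Hfrac Ha2). unfold del. nra. }
  destruct (is_lim_m_infty_lt x 0 del Hx ltac:(lra)) as [T0 HT0].
  set (T1 := Rmin T0 tau).
  assert (HT1 : T1 <= T0 /\ T1 <= tau) by (split; [apply Rmin_l | apply Rmin_r]).
  assert (early : forall t1, t1 < T1 -> p t1 <= 0 /\ q t1 <= 0).
  { intros t1 Ht1. apply max_nonpos. intros m Hm.
    destruct (is_lim_m_infty_lt p lp m Hp ltac:(lra)) as [Tp HTp].
    destruct (is_lim_m_infty_lt q lq m Hq ltac:(lra)) as [Tq HTq].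
    set (s := Rmin t1 (Rmin Tp Tq) - 1).
    assert (Hs : s < t1 /\ s < Tp /\ s < Tq).
    { pose proof (Rmin_l t1 (Rmin Tp Tq)). pose proof (Rmin_r t1 (Rmin Tp Tq)).
      pose proof (Rmin_l Tp Tq). pose proof (Rmin_r Tp Tq). unfold s; lra. }
    apply (cooperative_max_le p q dp dq (fun _ => a1) (fun _ => a2) (fun t => b * x t) x s t1 m);
      try lra.
    - intros t Ht. destruct (Hd t ltac:(lra)) as [Dp [Dq _]]. easy.
    - intros t Ht. destruct (Hineq t ltac:(lra)) as [Hx0 [Ip Iq]].
      pose proof (HT0 t ltac:(lra)).
      split; [nra | split; [nra | split; split; nra]].
    - apply Rmax_lub_lt; [apply HTp | apply HTq]; lra. }
  intros t1 Ht1. destruct (Rlt_or_le t1 T1) as [Hlt | Hge]; [now apply early|].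
  set (s := T1 - 1).
  assert (Hs : s < T1) by (unfold s; lra).
  destruct (continuity_ab_maj x s t1 ltac:(lra)) as [tm [Htm Htm']].
  { intros t Ht. apply Hd. lra. }
  (* on the compact [s, t1] an exponential weight exp (- k t) absorbs the coupling *)
  set (k := (b + 1) * x tm).
  assert (Hk : 0 <= x tm) by (apply Hineq; lra).
  assert (Hweighted : Rmax (p t1 * exp (- k * t1)) (q t1 * exp (- k * t1)) <= 0).
  { apply Rle_plus_epsilon. intros m Hm. rewrite Rplus_0_l.
    apply (cooperative_max_le (fun t => p t * exp (- k * t)) (fun t => q t * exp (- k * t))
      (fun t => (dp t - k * p t) * exp (- k * t)) (fun t => (dq t - k * q t) * exp (- k * t))
      (fun _ => a1 + k) (fun _ => a2 + k) (fun t => b * x t) x s t1 m); try lra.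
    - intros t Ht. destruct (Hd t ltac:(lra)) as [Dp [Dq _]].
      split; auto_derive_from_hyps; ring.
    - intros t Ht. destruct (Hineq t ltac:(lra)) as [Hx0 [Ip Iq]].
      pose proof (Htm t Ht). pose proof (exp_pos (- k * t)).
      assert ((dp t - k * p t) * exp (- k * t)
              <= (- a1 * p t + b * x t * q t - k * p t) * exp (- k * t))
        by (apply Rmult_le_compat_r; lra).
      assert ((dq t - k * q t) * exp (- k * t)
              <= (- a2 * q t + x t * p t - k * q t) * exp (- k * t))
        by (apply Rmult_le_compat_r; lra).
      split; [lra | split; [lra | unfold k; split; split; nra]].
    - destruct (early s Hs).
      pose proof (exp_pos (- k * s)). apply Rmax_lub_lt; nra. }
  pose proof (Rmax_l (p t1 * exp (- k * t1)) (q t1 * exp (- k * t1))).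
  pose proof (Rmax_r (p t1 * exp (- k * t1)) (q t1 * exp (- k * t1))).
  pose proof (exp_pos (- k * t1)). split; nra.
Qed.

(* unlike the positive part itself, its square is differentiable *)
Definition pos_sq (y : R) : R := Rmax y 0 ^ 2.

Lemma pos_sq_expansion y h :
  Rabs (pos_sq (y + h) - pos_sq y - 2 * Rmax y 0 * h) <= h ^ 2.
Proof.
  unfold pos_sq, Rmax.
  destruct (Rle_dec (y + h) 0); destruct (Rle_dec y 0); apply Rabs_le; split; nra.
Qed.

Lemma is_derive_pos_sq y : is_derive pos_sq y (2 * Rmax y 0).
Proof.
  apply is_derive_Reals. intros eps Heps. exists (mkposreal eps Heps).
  intros h Hh0 Hh. simpl in Hh.
  pose proof (pos_sq_expansion y h) as Hexp.
  replace ((pos_sq (y + h) - pos_sq y) / h - 2 * Rmax y 0)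
    with ((pos_sq (y + h) - pos_sq y - 2 * Rmax y 0 * h) / h) by (field; exact Hh0).
  unfold Rdiv. rewrite Rabs_mult, Rabs_inv.
  apply (Rle_lt_trans _ (h ^ 2 * / Rabs h)).
  - apply Rmult_le_compat_r; [left; apply Rinv_0_lt_compat, Rabs_pos_lt, Hh0 | exact Hexp].
  - rewrite <- (pow2_abs h). field_simplify; [lra | apply Rabs_no_R0, Hh0].
Qed.

Lemma is_lim_plus_comp (f g phi psi : R -> R) (a : Rbar) :
  is_lim f a 0 -> is_lim g a 0 -> ex_derive phi 0 -> ex_derive psi 0 ->
  is_lim (fun t => phi (f t) + psi (g t)) a (phi 0 + psi 0).
Proof.
  intros Hf Hg Hphi Hpsi.
  apply is_lim_plus'; apply is_lim_comp_continuous; auto.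
  - exact (ex_derive_continuous phi 0 Hphi).
  - exact (ex_derive_continuous psi 0 Hpsi).
Qed.

Lemma quartic_le (M C y : R) :
  0 < M -> 0 <= C -> 0 <= y -> M * y ^ 4 - 2 * y ^ 2 <= C -> y <= 1 + (2 + C) / M.
Proof.
  intros HM HC Hy Hq.
  assert (HCM : 0 <= (2 + C) / M) by (apply Rle_mult_inv_pos; lra).
  destruct (Rle_or_lt y 1) as [Hy1 | Hy1]; [lra|].
  (* for y > 1: M y^4 <= 2 y^2 + C <= (2 + C) y^2 *)
  assert (Hy2 : 1 < y ^ 2) by nra.
  assert (Hq' : y ^ 2 * (M * y ^ 2) <= y ^ 2 * (2 + C)) by nra.
  assert (Hz : M * y ^ 2 <= 2 + C) by (apply (Rmult_le_reg_l (y ^ 2)); lra).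
  assert (y ^ 2 <= (2 + C) / M).
  { apply (Rmult_le_reg_l M); [lra|].
    replace (M * ((2 + C) / M)) with (2 + C) by (field; lra). lra. }
  nra.
Qed.

Section Separatrix.

Variables (lam alpha beta : R) (x th u : R -> R) (tau : R).
Hypothesis sep : pos_separatrix_upto lam alpha beta x th u tau.
Hypothesis x_nonneg : forall t, t <= tau -> 0 <= x t.

Lemma separatrix_invariant (K L : R) :
  0 <= lam -> 0 < alpha -> 0 < L -> K * (alpha + 2 * L) = beta * L -> 2 * K <= beta ->
  1 <= L ^ 2 + lam * L -> K <= 1 ->
  forall t, t <= tau -> 0 <= u t + K * x t ^ 2 /\ th t <= L * x t.
Proof.
  intros Hlam Halpha HL HK HKbeta HL1 HK1.
  destruct sep as (sol & lim_x & lim_th & lim_u & _).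
  assert (lim_p : is_lim (fun t => - u t - K * x t ^ 2) m_infty (- 0 + - (K * 0 ^ 2))).
  { apply (is_lim_plus_comp u x (fun y => - y) (fun y => - (K * y ^ 2))); auto; auto_derive; easy. }
  assert (lim_q : is_lim (fun t => th t - L * x t) m_infty (0 + - (L * 0))).
  { apply (is_lim_plus_comp th x (fun y => y) (fun y => - (L * y))); auto; auto_derive; easy. }
  assert (Hpq : forall t, t <= tau -> - u t - K * x t ^ 2 <= 0 /\ th t - L * x t <= 0).
  { apply (cooperative_subsolution_nonpos
      (fun t => - u t - K * x t ^ 2) (fun t => th t - L * x t) x
      (fun t => alpha * u t + beta * x t * th t - 2 * K * x t * th t)
      (fun t => - lam * th t - x t * u t + x t - x t ^ 3 - L * th t)
      alpha (L + lam) (beta - 2 * K) tau (- 0 + - (K * 0 ^ 2)) (0 + - (L * 0))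
      Halpha ltac:(lra) ltac:(lra)); try lra.
    - intros s Hs. destruct (sol s Hs) as (Dx & Dth & Du).
      split; [|split]; try (auto_derive_from_hyps; ring).
      exact (is_derive_continuity_pt _ _ _ Dx).
    - intros s Hs. pose proof (x_nonneg s Hs) as Hx.
      split; [exact Hx | split].
      + assert (E : alpha * u s + beta * x s * th s - 2 * K * x s * th s
                    - (- alpha * (- u s - K * x s ^ 2) + (beta - 2 * K) * x s * (th s - L * x s))
                    = x s ^ 2 * (beta * L - K * (alpha + 2 * L))) by ring.
        rewrite HK in E. lra.
      + assert (E : - lam * th s - x s * u s + x s - x s ^ 3 - L * th s
                    - (- (L + lam) * (th s - L * x s) + x s * (- u s - K * x s ^ 2))
                    = - ((L ^ 2 + lam * L - 1) * x s + (1 - K) * x s ^ 3)) by ring.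
        assert (0 <= (L ^ 2 + lam * L - 1) * x s) by (apply Rmult_le_pos; lra).
        assert (0 <= (1 - K) * x s ^ 3) by (apply Rmult_le_pos; [lra | apply pow_le; lra]).
        lra.
    - exact lim_p.
    - exact lim_q.
    - exact lim_x. }
  intros t Ht. destruct (Hpq t Ht). split; lra.
Qed.

Lemma separatrix_energy_le (K L : R) :
  0 <= lam -> 0 < L -> K < 1 ->
  (forall t, t <= tau -> 0 <= u t + K * x t ^ 2) -> (forall t, t <= tau -> th t <= L * x t) ->
  forall t, t <= tau ->
    2 * pos_sq (th t) + ((1 - K) * x t ^ 4 - 2 * x t ^ 2) <= 2 * L ^ 2 / (1 - K).
Proof.
  intros Hlam HL HK Hu_low Hth_up.
  destruct sep as (sol & lim_x & lim_th & _ & _).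
  set (M := 1 - K).
  assert (HM : 0 < M) by (unfold M; lra).
  apply (le_of_deriv_nonpos_above _
    (fun t => 4 * Rmax (th t) 0 * (- lam * th t - x t * u t + x t - x t ^ 3)
              + (4 * M * x t ^ 3 - 4 * x t) * th t)
    tau (2 * pos_sq 0 + (M * 0 ^ 4 - 2 * 0 ^ 2))).
  - intros t Ht. destruct (sol t Ht) as (Dx & Dth & _).
    pose proof (is_derive_pos_sq (th t)). auto_derive_from_hyps. ring.
  - apply (is_lim_plus_comp th x (fun y => 2 * pos_sq y) (fun y => M * y ^ 4 - 2 * y ^ 2));
      auto; [|auto_derive; easy].
    exists (2 * (2 * Rmax 0 0)). apply is_derive_scal, is_derive_pos_sq.
  - unfold pos_sq. rewrite Rmax_left by lra.
    assert (0 < 2 * L ^ 2 / M) by (apply Rdiv_lt_0_compat; nra). lra.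
  - intros t Ht Habove.
    pose proof (x_nonneg t Ht) as Hx. pose proof (Hu_low t Ht) as Hu.
    pose proof (Hth_up t Ht) as Hth.
    (* below the level 1/M of x^2, th <= L x caps the energy at 2 L^2 / M *)
    assert (Hx2 : 1 <= M * x t ^ 2).
    { apply Rnot_lt_le. intros Hsmall.
      assert (Hpos : 0 <= Rmax (th t) 0 <= L * x t).
      { split; [apply Rmax_r | apply Rmax_lub; nra]. }
      assert (pos_sq (th t) <= L ^ 2 * x t ^ 2) by (unfold pos_sq; nra).
      assert (L ^ 2 * x t ^ 2 * M <= L ^ 2) by nra.
      assert (L ^ 2 * x t ^ 2 <= L ^ 2 / M).
      { apply (Rmult_le_reg_r M); [exact HM|].
        replace (L ^ 2 / M * M) with (L ^ 2) by (field; lra). lra. }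
      assert (2 * L ^ 2 / M = 2 * (L ^ 2 / M)) by (field; lra).
      nra. }
    destruct (Rle_dec (th t) 0) as [Hneg | Hpos].
    + rewrite Rmax_right by exact Hneg.
      assert (0 <= x t * (M * x t ^ 2 - 1)) by (apply Rmult_le_pos; lra).
      nra.
    + rewrite Rmax_left by lra.
      replace (4 * th t * (- lam * th t - x t * u t + x t - x t ^ 3)
               + (4 * M * x t ^ 3 - 4 * x t) * th t)
        with (- 4 * th t * (lam * th t + x t * (u t + K * x t ^ 2))) by (unfold M; ring).
      assert (0 <= lam * th t) by (apply Rmult_le_pos; lra).
      assert (0 <= x t * (u t + K * x t ^ 2)) by (apply Rmult_le_pos; lra).
      nra.
Qed.

Lemma separatrix_x_le (K L : R) :
  0 <= lam -> 0 < L -> K < 1 ->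
  (forall t, t <= tau -> 0 <= u t + K * x t ^ 2) -> (forall t, t <= tau -> th t <= L * x t) ->
  forall t, t <= tau -> x t <= 1 + (2 + 2 * L ^ 2 / (1 - K)) / (1 - K).
Proof.
  intros Hlam HL HK Hu_low Hth_up t Ht.
  pose proof (separatrix_energy_le K L Hlam HL HK Hu_low Hth_up t Ht).
  assert (0 <= pos_sq (th t)) by apply pow2_ge_0.
  apply quartic_le; [lra | apply Rle_mult_inv_pos; nra | now apply x_nonneg | lra].
Qed.

Lemma separatrix_abs_u_le (K X : R) :
  0 < alpha -> 0 < beta -> 0 <= K -> 0 < X ->
  (forall t, t <= tau -> x t <= X) -> (forall t, t <= tau -> 0 <= u t + K * x t ^ 2) ->
  forall t, t <= tau -> Rabs (u t) <= beta * X ^ 2 / 2 + K * X ^ 2.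
Proof.
  intros Halpha Hbeta HK HX Hx_up Hu_low.
  destruct sep as (sol & lim_x & _ & lim_u & _).
  assert (Hx2 : forall t, t <= tau -> x t ^ 2 <= X ^ 2).
  { intros t Ht. pose proof (x_nonneg t Ht). pose proof (Hx_up t Ht). apply pow_incr; lra. }
  assert (Hw : forall t, t <= tau -> 2 * u t + beta * x t ^ 2 <= beta * X ^ 2).
  { apply (le_of_deriv_nonpos_above _ (fun t => - 2 * alpha * u t) tau (2 * 0 + beta * 0 ^ 2)).
    - intros t Ht. destruct (sol t Ht) as (Dx & _ & Du). auto_derive_from_hyps. ring.
    - apply (is_lim_plus_comp u x (fun y => 2 * y) (fun y => beta * y ^ 2));
        auto; auto_derive; easy.
    - assert (0 < beta * X ^ 2) by (apply Rmult_lt_0_compat; [lra | apply pow_lt; lra]). lra.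
    - intros t Ht Habove. pose proof (Hx2 t Ht). assert (0 < u t) by nra. nra. }
  intros t Ht. pose proof (Hw t Ht). pose proof (Hu_low t Ht). pose proof (Hx2 t Ht).
  assert (0 <= beta * x t ^ 2) by (apply Rmult_le_pos; [lra | apply pow2_ge_0]).
  apply Rabs_le. split; nra.
Qed.

Lemma separatrix_th_sq_le (L X U : R) :
  0 <= lam -> 0 <= L -> 0 < X -> 0 <= U ->
  (forall t, t <= tau -> x t <= X) -> (forall t, t <= tau -> Rabs (u t) <= U) ->
  (forall t, t <= tau -> th t <= L * x t) ->
  forall t, t <= tau -> th t ^ 2 <= 2 * (X * U + X ^ 3) * X + L ^ 2 * X ^ 2.
Proof.
  intros Hlam HL HX HU Hx_up Hu_abs Hth_up.
  destruct sep as (sol & lim_x & lim_th & _ & _).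
  set (C1 := X * U + X ^ 3).
  assert (HC1 : 0 < C1).
  { unfold C1. assert (0 <= X * U) by (apply Rmult_le_pos; lra).
    assert (0 < X ^ 3) by (apply pow_lt; lra). lra. }
  (* while th < 0 its speed is at least - C1, and x' = th converts th^2 into a drop of x *)
  assert (HS : forall t, t <= tau -> 2 * C1 * x t + th t ^ 2 <= 2 * C1 * X + L ^ 2 * X ^ 2).
  { apply (le_of_deriv_nonpos_above _
      (fun t => 2 * th t * (C1 + (- lam * th t - x t * u t + x t - x t ^ 3))) tau
      (2 * C1 * 0 + 0 ^ 2)).
    - intros t Ht. destruct (sol t Ht) as (Dx & Dth & _). auto_derive_from_hyps. ring.
    - apply (is_lim_plus_comp x th (fun y => 2 * C1 * y) (fun y => y ^ 2)); auto; auto_derive; easy.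
    - assert (0 <= L ^ 2 * X ^ 2) by (rewrite <- Rpow_mult_distr; apply pow2_ge_0). nra.
    - intros t Ht Habove.
      pose proof (x_nonneg t Ht) as Hx. pose proof (Hx_up t Ht). pose proof (Hu_abs t Ht).
      pose proof (Hth_up t Ht).
      assert (Hneg : th t < 0).
      { apply Rnot_le_lt. intros Hpos.
        assert (th t ^ 2 <= L ^ 2 * X ^ 2).
        { replace (L ^ 2 * X ^ 2) with ((L * X) ^ 2) by ring.
          apply pow_incr. split; [lra|]. apply (Rle_trans _ (L * x t)); [lra|].
          apply Rmult_le_compat_l; lra. }
        nra. }
      assert (x t * u t <= X * U).
      { apply (Rle_trans _ (Rabs (x t * u t))); [apply Rle_abs|].
        rewrite Rabs_mult, Rabs_pos_eq by lra. apply Rmult_le_compat; try lra. apply Rabs_pos. }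
      assert (x t ^ 3 <= X ^ 3) by (apply pow_incr; lra).
      assert (0 <= - lam * th t) by nra.
      assert (0 <= C1 + (- lam * th t - x t * u t + x t - x t ^ 3)) by (unfold C1; lra).
      nra. }
  intros t Ht. pose proof (HS t Ht). pose proof (x_nonneg t Ht).
  assert (0 <= 2 * C1 * x t) by nra. lra.
Qed.

End Separatrix.

Theorem lemma2 (lam alpha beta L : R) :
  0 <= lam -> 0 < alpha -> 0 < beta ->
  alpha * (sqrt (lam ^ 2 + 4) + lam) > 2 * (beta - 2) ->
  0 < L -> L > (sqrt (lam ^ 2 + 4) - lam) / 2 ->
  beta * L / (alpha + 2 * L) < 1 ->
  0 < 1 - beta * L / (alpha + 2 * L) ->
  exists Rb : R, 0 < Rb /\
    forall (x th u : R -> R) (tau : R),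
      pos_separatrix_upto lam alpha beta x th u tau ->
      (forall t, t <= tau -> 0 <= x t) ->
      forall t, t <= tau ->
        x t <= Rb /\ Rabs (th t) <= Rb /\ Rabs (u t) <= Rb.
Proof.
  (* the condition on alpha only guarantees that an admissible L exists, and
     0 < 1 - K repeats K < 1 *)
  intros Hlam Halpha Hbeta _ HL HL_root HK1 _.
  set (K := beta * L / (alpha + 2 * L)) in *.
  assert (HK : K * (alpha + 2 * L) = beta * L) by (unfold K; field; lra).
  assert (HK0 : 0 <= K) by (unfold K; left; apply Rdiv_lt_0_compat; nra).
  assert (HKbeta : 2 * K <= beta) by nra.
  assert (HL1 : 1 <= L ^ 2 + lam * L).
  { pose proof (sqrt_pos (lam ^ 2 + 4)). pose proof (sqrt_sqrt (lam ^ 2 + 4) ltac:(nra)). nra. }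
  set (X := 1 + (2 + 2 * L ^ 2 / (1 - K)) / (1 - K)).
  set (U := beta * X ^ 2 / 2 + K * X ^ 2).
  set (B := 2 * (X * U + X ^ 3) * X + L ^ 2 * X ^ 2).
  assert (HX : 1 <= X).
  { assert (0 <= 2 * L ^ 2 / (1 - K)) by (apply Rle_mult_inv_pos; nra).
    assert (0 <= (2 + 2 * L ^ 2 / (1 - K)) / (1 - K)) by (apply Rle_mult_inv_pos; lra).
    unfold X. lra. }
  assert (HU : 0 <= U) by (unfold U; nra).
  assert (HB : 0 <= B) by (unfold B; nra).
  exists (X + U + (1 + B)). split; [lra|].
  intros x th u tau sep x_nonneg t Ht.
  pose proof (separatrix_invariant lam alpha beta x th u tau sep x_nonneg K L
    Hlam Halpha HL HK HKbeta HL1 ltac:(lra)) as Hinv.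
  assert (Hu_low := fun s Hs => proj1 (Hinv s Hs)).
  assert (Hth_up := fun s Hs => proj2 (Hinv s Hs)).
  pose proof (separatrix_x_le lam alpha beta x th u tau sep x_nonneg K L
    Hlam HL HK1 Hu_low Hth_up) as Hx.
  fold X in Hx.
  pose proof (separatrix_abs_u_le lam alpha beta x th u tau sep x_nonneg K X
    Halpha Hbeta HK0 ltac:(lra) Hx Hu_low) as Hu.
  fold U in Hu.
  pose proof (separatrix_th_sq_le lam alpha beta x th u tau sep x_nonneg L X U
    Hlam ltac:(lra) ltac:(lra) HU Hx Hu Hth_up t Ht) as Hth.
  fold B in Hth.
  pose proof (Hx t Ht). pose proof (Hu t Ht).
  pose proof (pow2_abs (th t)). pose proof (Rabs_pos (th t)).
  split; [lra | split; [nra | lra]].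
Qed.
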